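(* Let $q\in\mathbb{R}$ and define on $(0,\pi/2)$ \[ A(x)=(\sin x-x\cos x)^2\cos x,\quad B(x)=x(\sin x-x\cos x)\sin^2x,\quad C(x)=-(2x^2\cos x-x\sin x-\cos x\sin^2x), \] and $g_1(x)=\dfrac{qB(x)-C(x)}{A(x)}$. Then (i) if $q\ge1$, $g_1$ is increasing on $(0,\pi/2)$ and $3q-\frac85<g_1(x)<\infty$ if $q>1$, while $3q-\frac85<g_1(x)<\frac{\pi^2}{4}-1$ if $q=1$; (ii) if $q\le\frac{34}{35}$, $g_1$ is decreasing on $(0,\pi/2)$ and $-\infty<g_1(x)<3q-\frac85$. *)

From Stdlib Require Import Reals Lra.
Open Scope R_scope.

Definition A (x : R) : R := (sin x - x * cos x) ^ 2 * cos x.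
Definition B (x : R) : R := x * (sin x - x * cos x) * (sin x) ^ 2.
Definition C (x : R) : R := - (2 * x ^ 2 * cos x - x * sin x - cos x * (sin x) ^ 2).
Definition g1 (q x : R) : R := (q * B x - C x) / A x.

Definition in_I (x : R) : Prop := 0 < x < PI / 2.

Definition strictly_increasing_on_I (f : R -> R) : Prop :=
  forall x y, in_I x -> in_I y -> x < y -> f x < f y.
Definition strictly_decreasing_on_I (f : R -> R) : Prop :=
  forall x y, in_I x -> in_I y -> x < y -> f y < f x.

(* With S := sin x - x cos x > 0, the quotient rule and sin^2 + cos^2 = 1 give
   (g1 q)' = S ((q - 1) sin x S E + cos^2 x F) / A^2 for two trigonometric polynomials
   E, F. This is affine in q, so g1 q increases for q >= 1 as soon as E, F > 0, and
   decreases for q <= 34/35 as soon as its value at q = 34/35 is negative. Similarly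
   (g1 q - (3q - 8/5)) A is affine in q with slope B - 3A > 0, and its signs at q = 1
   and q = 34/35 on (0, 3/2] give the bound 3q - 8/5 there, which monotonicity
   carries to (0, pi/2).
   Every sign condition becomes a polynomial inequality in x once sin and cos are
   replaced by their Taylor enclosures of degree 11-13; it is then certified by an
   explicit polynomial in x^2 and interval subdivision. Near pi/2 the Taylor bound
   on cos x is too weak and constant enclosures of sin and cos are used instead.
   Finally g1 1 tends to pi^2/4 - 1 at pi/2, which bounds it from above. *)

From Pilot Require Import Defs.
From Stdlib Require Import Reals Lra List.
From Coquelicot Require Import Hierarchy Derive AutoDerive.
Import ListNotations.
Open Scope R_scope.

(** * Taylor enclosures of sine and cosine *)

Definition sin_lb (x : R) : R :=
  x - x^3/6 + x^5/120 - x^7/5040 + x^9/362880 - x^11/39916800.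
Definition sin_ub (x : R) : R := sin_lb x + x^13/6227020800.
Definition cos_lb (x : R) : R :=
  1 - x^2/2 + x^4/24 - x^6/720 + x^8/40320 - x^10/3628800.
Definition cos_ub (x : R) : R := cos_lb x + x^12/479001600.

Ltac expand_taylor_sums :=
  unfold sin_approx, sin_term, cos_approx, cos_term;
  cbn [sum_f_R0 Nat.mul Nat.add]; rewrite ?fact_simpl, ?mult_INR; simpl INR; simpl pow.

Lemma sin_taylor_bounds x : 0 <= x <= PI -> sin_lb x <= sin x <= sin_ub x.
Proof.
  intros [H0 H1]; pose proof (sin_bound x 2 H0 H1) as H; revert H.
  unfold sin_ub, sin_lb; expand_taylor_sums; intros H; split; lra.
Qed.

Lemma cos_taylor_bounds x : -(PI/2) <= x <= PI/2 -> cos_lb x <= cos x <= cos_ub x.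
Proof.
  intros [H0 H1]; pose proof (cos_bound x 2 ltac:(lra) H1) as H; revert H.
  unfold cos_ub, cos_lb; expand_taylor_sums; intros H; split; lra.
Qed.

Lemma PI_le_31416 : PI <= 31416/10000.
Proof.
  destruct (Rle_lt_dec PI (31416/10000)) as [H | H]; [exact H | exfalso].
  pose proof (sin_ge_0 (31416/10000) ltac:(lra) ltac:(lra)) as Hpos.
  destruct (sin_bound (31416/10000) 3 ltac:(lra) ltac:(lra)) as [_ Hub]; revert Hub.
  expand_taylor_sums; lra.
Qed.

Lemma PI2_gt_313_200 : 313/200 < PI/2.
Proof.
  apply PI2_lower_bound; [lra |].
  replace (313/200) with (2 * (313/400)) by lra; rewrite cos_2a_sin.
  pose proof PI2_3_2.
  destruct (sin_taylor_bounds (313/400) ltac:(lra)) as [_ Hub].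
  pose proof (sin_ge_0 (313/400) ltac:(lra) ltac:(lra)).
  unfold sin_ub, sin_lb in Hub; nra.
Qed.

(** * Polynomial sign certificates *)

Lemma pow_shift_bounds (t h : R) (n : nat) : 0 <= t <= h -> 0 <= t ^ n <= h ^ n.
Proof. intros [H0 H1]; split; [apply pow_le | apply pow_incr]; lra. Qed.

Ltac shifted_pow_facts Ht n :=
  lazymatch n with
  | O => idtac
  | S ?m => pose proof (pow_shift_bounds _ _ n Ht); shifted_pow_facts Ht m
  end.

(* On each piece [a, b] of the subdivision, [lra] expands the polynomial (of degree
   at most [deg]) in powers of [y - a], which lie in [0, (b - a)^k]. *)
Ltac sign_by_subdivision y lo pts deg :=
  lazymatch pts with
  | nil => lra
  | cons ?m ?rest =>
      destruct (Rle_lt_dec y m);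
      [ let Ht := fresh in
        assert (Ht : 0 <= y - lo <= m - lo) by lra;
        shifted_pow_facts Ht deg; lra
      | sign_by_subdivision y m rest deg ]
  end.

Lemma sin_lb_nonneg x : 0 <= x <= 313/200 -> 0 <= sin_lb x.
Proof.
  intros Hx.
  replace (sin_lb x) with
    (x * (1 - x^2/6 + (x^2)^2/120 - (x^2)^3/5040 + (x^2)^4/362880 - (x^2)^5/39916800))
    by (unfold sin_lb; field).
  apply Rmult_le_pos; [lra |].
  assert (Hy : 0 <= x^2 <= 97969/40000) by nra.
  generalize dependent (x^2); intros y Hy.
  sign_by_subdivision y 0 [97969/40000] 5%nat.
Qed.

Lemma cos_lb_nonneg x : 0 <= x <= 313/200 -> 0 <= cos_lb x.
Proof.
  intros Hx.
  replace (cos_lb x) with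
    (1 - x^2/2 + (x^2)^2/24 - (x^2)^3/720 + (x^2)^4/40320 - (x^2)^5/3628800)
    by (unfold cos_lb; field).
  assert (Hy : 0 <= x^2 <= 97969/40000) by nra.
  generalize dependent (x^2); intros y Hy.
  sign_by_subdivision y 0 [97969/80000; 293907/160000; 685783/320000; 97969/40000] 5%nat.
Qed.

Definition in_taylor_box (x s c : R) : Prop :=
  0 <= sin_lb x <= s /\ s <= sin_ub x /\ 0 <= cos_lb x <= c /\ c <= cos_ub x.

Definition in_near_pi2_box (x s c : R) : Prop :=
  313/200 <= x <= 15708/10000 /\ 99996/100000 <= s <= 1 /\ 0 <= c <= 58/10000.

Lemma sin_cos_in_taylor_box x : 0 <= x <= 313/200 -> in_taylor_box x (sin x) (cos x).
Proof.
  intros Hx; pose proof PI2_gt_313_200.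
  destruct (sin_taylor_bounds x ltac:(lra)), (cos_taylor_bounds x ltac:(lra)).
  pose proof (sin_lb_nonneg x ltac:(lra)); pose proof (cos_lb_nonneg x Hx).
  repeat split; lra.
Qed.

Lemma sin_cos_in_near_pi2_box x : 313/200 <= x < PI/2 -> in_near_pi2_box x (sin x) (cos x).
Proof.
  intros Hx; pose proof PI_le_31416; pose proof PI2_gt_313_200.
  assert (Hc : cos x <= cos (313/200)) by (apply cos_decr_1; lra).
  destruct (cos_taylor_bounds (313/200) ltac:(lra)) as [_ Hc'].
  unfold cos_ub, cos_lb in Hc'.
  pose proof (cos_ge_0 x ltac:(lra) ltac:(lra)); pose proof (sin_ge_0 x ltac:(lra) ltac:(lra)).
  pose proof (SIN_bound x); pose proof (sin2_cos2 x); unfold Rsqr in *.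
  repeat split; nra.
Qed.

Lemma pow_succ_le (x X : R) (n : nat) : 0 <= x <= X -> x ^ S n <= X * x ^ n.
Proof. intros Hx; simpl; apply Rmult_le_compat_r; [apply pow_le |]; lra. Qed.

Lemma pos_of_scaled_cert (cert : R -> R) (N : nat) (Y x p : R) :
  (forall y, 0 <= y <= Y -> 0 < cert y) -> 0 < x -> x ^ 2 <= Y ->
  x ^ N * cert (x ^ 2) <= p -> 0 < p.
Proof.
  intros Hcert Hx HY Hp.
  pose proof (Hcert (x ^ 2) (conj (pow_le x 2 (Rlt_le _ _ Hx)) HY)).
  pose proof (pow_lt x N Hx); nra.
Qed.

Lemma neg_of_scaled_cert (cert : R -> R) (N : nat) (Y x p : R) :
  (forall y, 0 <= y <= Y -> cert y < 0) -> 0 < x -> x ^ 2 <= Y ->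
  p <= x ^ N * cert (x ^ 2) -> p < 0.
Proof.
  intros Hcert Hx HY Hp.
  pose proof (Hcert (x ^ 2) (conj (pow_le x 2 (Rlt_le _ _ Hx)) HY)).
  pose proof (pow_lt x N Hx); nra.
Qed.

Ltac subst_vars t x s c x' s' c' :=
  lazymatch t with
  | ?u * ?v =>
      let u' := subst_vars u x s c x' s' c' in
      let v' := subst_vars v x s c x' s' c' in constr:(u' * v')
  | ?u ^ ?n => let u' := subst_vars u x s c x' s' c' in constr:(u' ^ n)
  | x => x'
  | s => s'
  | c => c'
  | _ => t
  end.

Ltac prove_nonneg := repeat first [apply Rmult_le_pos | apply pow_le]; lra.

Ltac prove_monotone :=
  lazymatch goal with
  | |- _ * _ <= _ * _ =>
      apply Rmult_le_compat; [prove_nonneg | prove_nonneg | prove_monotone | prove_monotone]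
  | |- _ ^ ?n <= _ ^ ?n => apply pow_incr; split; [prove_nonneg | prove_monotone]
  | _ => lra
  end.

(* [t] must be a signed sum of monomials in [x, s, c] with nonnegative coefficients;
   for each monomial the bound needed to bound [t] from below ([lower = true]) or from
   above is added, using [xl <= x <= xh], [sl <= s <= su], [cl <= c <= cu], [0 <= xl, sl, cl]. *)
Ltac bound_monomials lower t x s c xl xh sl su cl cu :=
  lazymatch t with
  | ?u + ?v =>
      bound_monomials lower u x s c xl xh sl su cl cu;
      bound_monomials lower v x s c xl xh sl su cl cu
  | ?u - ?v =>
      bound_monomials lower u x s c xl xh sl su cl cu;
      bound_monomials (negb lower) v x s c xl xh sl su cl cu
  | _ =>
      lazymatch eval compute in lower with
      | true => let lo := subst_vars t x s c xl sl cl in assert (lo <= t) by prove_monotone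
      | false => let hi := subst_vars t x s c xh su cu in assert (t <= hi) by prove_monotone
      end
  end.

Ltac pow_nonneg_facts x Hx n :=
  lazymatch n with
  | O => idtac
  | S ?m => pose proof (pow_le x n Hx); pow_nonneg_facts x Hx m
  end.

Ltac pow_step_facts x X Hx N d :=
  lazymatch d with
  | O => idtac
  | S ?e =>
      let H := fresh in
      pose proof (pow_succ_le x X (N + e) Hx) as H; cbn [Nat.add] in H;
      pow_step_facts x X Hx N e
  end.

Ltac name_expansion t :=
  let e := fresh "e" in
  let Ee := fresh "Ee" in
  remember t as e eqn:Ee; unfold sin_ub, sin_lb, cos_ub, cos_lb in Ee; field_simplify in Ee.

(* [lra] is very slow at multiplying out the products of Taylor polynomials itself,
   so each of them is first named and expanded by [field_simplify]. *)
Ltac expand_taylor_products x :=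
  repeat match goal with
  | H : ?lo <= _ |- _ =>
      lazymatch lo with context [sin_lb x] => idtac | context [cos_lb x] => idtac end;
      name_expansion lo
  | H : _ <= ?hi |- _ =>
      lazymatch hi with context [sin_ub x] => idtac | context [cos_ub x] => idtac end;
      name_expansion hi
  end.

(* Goal [x ^ k * cert (x ^ 2) <= p] (or the reverse), [p] and [cert] unfolded: the
   powers [x ^ (N + i)], [0 < i <= d], that exceed the degree of [x ^ k * cert (x ^ 2)]
   are controlled through [x ^ (n + 1) <= X * x ^ n]. *)
Ltac taylor_certificate X N d :=
  let Hx := fresh "Hx" in
  let Hbox := fresh "Hbox" in
  intros Hx Hbox;
  lazymatch type of Hbox with
  | in_taylor_box ?x ?s ?c =>
      let Hs1 := fresh in let Hs2 := fresh in let Hc1 := fresh in let Hc2 := fresh in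
      destruct Hbox as (Hs1 & Hs2 & Hc1 & Hc2);
      lazymatch goal with
      | |- _ ^ _ * _ <= ?t =>
          bound_monomials true t x s c x x (sin_lb x) (sin_ub x) (cos_lb x) (cos_ub x)
      | |- ?t <= _ ^ _ * _ =>
          bound_monomials false t x s c x x (sin_lb x) (sin_ub x) (cos_lb x) (cos_ub x)
      end;
      clear Hs1 Hs2 Hc1 Hc2;
      expand_taylor_products x;
      let M := eval compute in (N + d)%nat in
      pow_nonneg_facts x (proj1 Hx) M;
      pow_step_facts x X Hx N d;
      lra
  end.

Ltac near_pi2_certificate :=
  let Hbox := fresh "Hbox" in
  intros Hbox;
  lazymatch type of Hbox with
  | in_near_pi2_box ?x ?s ?c =>
      destruct Hbox as (? & ? & ?);
      lazymatch goal with
      | |- 0 < ?t =>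
          bound_monomials true t x s c (313/200) (15708/10000) (99996/100000) 1 0 (58/10000)
      | |- ?t < 0 =>
          bound_monomials false t x s c (313/200) (15708/10000) (99996/100000) 1 0 (58/10000)
      end;
      lra
  end.

(* With [s = sin x], [c = cos x]: [(g1 q)' = deriv_num q x s c / A x ^ 2], where
   [deriv_num q x s c = (s - x c) ((q - 1) s (s - x c) deriv_factor_slope x s c
   + c^2 deriv_factor_at_1 x s c)], and [g1 q x - (3q - 8/5) = ((q - 1) gap_num_slope x s c
   + gap_num_at_1 x s c) / A x]; the [_at_34_35] polynomials play the role of the
   [_at_1] ones for q = 34/35. The coefficients of each certificate [p_cert] are the
   leading Taylor coefficients of [p x (sin x) (cos x) / x ^ N], rounded, the higher
   ones shifted so as to absorb the Taylor remainders. *)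
Definition deriv_factor_slope (x s c : R) : R :=
  s^2*c + x*s*c^2 + x*s^3 - 2*x^2*c^3 - 2*x^2*s^2*c.

Definition deriv_factor_slope_cert (y : R) : R :=
  1.77777777777777e-1 - 3.80952380952381e-2*y + 4.02116402116402e-3*y^2
  - 2.76842499064722e-4*y^3 + 1.37052927231498e-5*y^4 - 5.10989598291186e-7*y^5
  + 1.45669972242576e-8*y^6 - 3.18937708708432e-10*y^7 + 5.92771055333184e-12*y^8
  - 1.34280734494394e-13*y^9.

Lemma deriv_factor_slope_cert_pos y : 0 <= y <= 97969/40000 -> 0 < deriv_factor_slope_cert y.
Proof.
  intros; unfold deriv_factor_slope_cert; sign_by_subdivision y 0 [97969/40000] 9%nat.
Qed.

Lemma deriv_factor_slope_taylor x s c : 0 <= x <= 313/200 -> in_taylor_box x s c ->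
  x^6 * deriv_factor_slope_cert (x^2) <= deriv_factor_slope x s c.
Proof.
  unfold deriv_factor_slope, deriv_factor_slope_cert; taylor_certificate (313/200) 24%nat 16%nat.
Qed.

Lemma deriv_factor_slope_near_pi2 x s c : in_near_pi2_box x s c ->
  0 < deriv_factor_slope x s c.
Proof. unfold deriv_factor_slope; near_pi2_certificate. Qed.

Definition deriv_factor_at_1 (x s c : R) : R :=
  6*x*s*c^2 + 5*x*s^3 - 3*s^2*c - 3*x^2*c^3 - 3*x^2*s^2*c - 2*x^3*s*c^2 - 2*x^3*s^3.

Definition deriv_factor_at_1_cert (y : R) : R :=
  1.69312169312169e-3 - 2.82186948853616e-4*y + 2.2878769158531e-5*y^2
  - 1.18518955324511e-6*y^3 + 4.24733669883581e-8*y^4 - 1.03807698604877e-9*y^5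
  + 1.31429695398941e-11*y^6 + 2.40412997360145e-13*y^7 - 2.14001066610499e-14*y^8
  + 7.17846238630617e-16*y^9.

Lemma deriv_factor_at_1_cert_pos y : 0 <= y <= 97969/40000 -> 0 < deriv_factor_at_1_cert y.
Proof.
  intros; unfold deriv_factor_at_1_cert; sign_by_subdivision y 0 [97969/40000] 9%nat.
Qed.

Lemma deriv_factor_at_1_taylor x s c : 0 <= x <= 313/200 -> in_taylor_box x s c ->
  x^10 * deriv_factor_at_1_cert (x^2) <= deriv_factor_at_1 x s c.
Proof.
  unfold deriv_factor_at_1, deriv_factor_at_1_cert; taylor_certificate (313/200) 28%nat 14%nat.
Qed.

Lemma deriv_factor_at_1_near_pi2 x s c : in_near_pi2_box x s c ->
  0 < deriv_factor_at_1 x s c.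
Proof. unfold deriv_factor_at_1; near_pi2_certificate. Qed.

Definition deriv_factor_at_34_35 (x s c : R) : R :=
  6*x*s*c^4 + 5*x*s^3*c^2 + 3/35*x^2*s^4*c - 3*s^2*c^3 - 1/35*s^4*c - 1/35*x*s^5
  - 3*x^2*c^5 - 102/35*x^2*s^2*c^3 - 72/35*x^3*s*c^4 - 72/35*x^3*s^3*c^2.

Definition deriv_factor_at_34_35_cert (y : R) : R :=
  - 1.1609977324263e-3 + 6.86095182374945e-4*y - 1.67388125306917e-4*y^2
  + 2.41675922881044e-5*y^3 - 2.39717766975892e-6*y^4 + 1.76713335615485e-7*y^5
  - 1.00655231197507e-8*y^6 + 4.43272017824578e-10*y^7 - 1.41311960056505e-11*y^8
  + 2.46227148958631e-13*y^9.

Lemma deriv_factor_at_34_35_cert_neg y : 0 <= y <= 97969/40000 ->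
  deriv_factor_at_34_35_cert y < 0.
Proof.
  intros; unfold deriv_factor_at_34_35_cert.
  sign_by_subdivision y 0 [97969/80000; 97969/40000] 9%nat.
Qed.

Lemma deriv_factor_at_34_35_taylor x s c : 0 <= x <= 313/200 -> in_taylor_box x s c ->
  deriv_factor_at_34_35 x s c <= x^12 * deriv_factor_at_34_35_cert (x^2).
Proof.
  unfold deriv_factor_at_34_35, deriv_factor_at_34_35_cert.
  taylor_certificate (313/200) 30%nat 36%nat.
Qed.

Lemma deriv_factor_at_34_35_near_pi2 x s c : in_near_pi2_box x s c ->
  deriv_factor_at_34_35 x s c < 0.
Proof. unfold deriv_factor_at_34_35; near_pi2_certificate. Qed.

Definition gap_num_slope (x s c : R) : R :=
  x*s^3 + 6*x*s*c^2 - x^2*s^2*c - 3*s^2*c - 3*x^2*c^3.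

Definition gap_num_slope_cert (y : R) : R :=
  8.88888888888888e-2 - 2.58201058201059e-2*y + 3.42151675485008e-3*y^2
  - 2.75875974040657e-4*y^3 + 1.52763214519166e-5*y^4 - 6.23738360731307e-7*y^5
  + 1.9714626012392e-8*y^6 - 4.98561529315021e-10*y^7 + 1.02745290911279e-11*y^8
  - 1.73636744683322e-13*y^9.

Lemma gap_num_slope_cert_pos y : 0 <= y <= 9/4 -> 0 < gap_num_slope_cert y.
Proof.
  intros; unfold gap_num_slope_cert; sign_by_subdivision y 0 [9/4] 9%nat.
Qed.

Lemma gap_num_slope_taylor x s c : 0 <= x <= 3/2 -> in_taylor_box x s c ->
  x^8 * gap_num_slope_cert (x^2) <= gap_num_slope x s c.
Proof.
  unfold gap_num_slope, gap_num_slope_cert; taylor_certificate (3/2) 26%nat 14%nat.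
Qed.

Definition gap_num_at_1 (x s c : R) : R :=
  x*s^3 + 2*x^2*c + 14/5*x*s*c^2 - x^2*s^2*c - x*s - 12/5*s^2*c - 7/5*x^2*c^3.

Definition gap_num_at_1_cert (y : R) : R :=
  2.53968253968253e-3 - 1.60846560846561e-3*y + 2.95654962321628e-4*y^2
  - 2.8666090670059e-5*y^3 + 1.79084981499002e-6*y^4 - 8.02095773229482e-8*y^5
  + 2.75416871467907e-9*y^6 - 7.53107974499004e-11*y^7 + 1.65966108944468e-12*y^8
  - 2.93318493598842e-14*y^9.

Lemma gap_num_at_1_cert_pos y : 0 <= y <= 9/4 -> 0 < gap_num_at_1_cert y.
Proof.
  intros; unfold gap_num_at_1_cert; sign_by_subdivision y 0 [9/8; 27/16; 9/4] 9%nat.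
Qed.

Lemma gap_num_at_1_taylor x s c : 0 <= x <= 3/2 -> in_taylor_box x s c ->
  x^8 * gap_num_at_1_cert (x^2) <= gap_num_at_1 x s c.
Proof.
  unfold gap_num_at_1, gap_num_at_1_cert; taylor_certificate (3/2) 26%nat 14%nat.
Qed.

Definition gap_num_at_34_35 (x s c : R) : R :=
  34/35*x*s^3 + 2*x^2*c + 92/35*x*s*c^2 - 34/35*x^2*s^2*c - x*s - 81/35*s^2*c
  - 46/35*x^2*c^3.

Definition gap_num_at_34_35_cert (y : R) : R :=
  - 8.70748299319727e-4 + 1.97897340754484e-4*y - 2.07543805191197e-5*y^2
  + 1.33911516068546e-6*y^3 - 5.87667845586638e-8*y^4 + 1.79468320828839e-9*y^5
  - 3.65318152486451e-11*y^6 + 3.9615290501036e-13*y^7 + 2.0998332171478e-15*y^8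
  - 1.69672134738547e-16*y^9.

Lemma gap_num_at_34_35_cert_neg y : 0 <= y <= 9/4 ->
  gap_num_at_34_35_cert y < 0.
Proof.
  intros; unfold gap_num_at_34_35_cert; sign_by_subdivision y 0 [9/4] 9%nat.
Qed.

Lemma gap_num_at_34_35_taylor x s c : 0 <= x <= 3/2 -> in_taylor_box x s c ->
  gap_num_at_34_35 x s c <= x^10 * gap_num_at_34_35_cert (x^2).
Proof.
  unfold gap_num_at_34_35, gap_num_at_34_35_cert; taylor_certificate (3/2) 28%nat 12%nat.
Qed.

(** * Monotonicity and bounds of g1 *)

Lemma lt_of_is_derive_pos (f f' : R -> R) (a b : R) :
  a < b -> (forall t, a <= t <= b -> is_derive f t (f' t)) ->
  (forall t, a < t < b -> 0 < f' t) -> f a < f b.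
Proof.
  intros Hab Hd Hpos.
  destruct (MVT_cor2 f f' a b Hab) as (t & Heq & Ht).
  { intros t Ht; apply is_derive_Reals, Hd, Ht. }
  pose proof (Hpos t Ht); nra.
Qed.

Lemma gt_of_is_derive_neg (f f' : R -> R) (a b : R) :
  a < b -> (forall t, a <= t <= b -> is_derive f t (f' t)) ->
  (forall t, a < t < b -> f' t < 0) -> f b < f a.
Proof.
  intros Hab Hd Hneg.
  destruct (MVT_cor2 f f' a b Hab) as (t & Heq & Ht).
  { intros t Ht; apply is_derive_Reals, Hd, Ht. }
  pose proof (Hneg t Ht); nra.
Qed.

Lemma lt_of_increasing_near_bound (f : R -> R) (a b m L K x : R) :
  (forall u v, a < u -> u < v -> v < b -> f u < f v) ->
  a <= m < b -> 0 <= K -> (forall z, m <= z < b -> f z <= L + K * (b - z)) ->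
  a < x < b -> f x < L.
Proof.
  intros Hinc Hm HK Hbound Hx.
  pose proof (Rmax_l x m); pose proof (Rmax_r x m); pose proof (Rmax_lub_lt x m b).
  set (y := (Rmax x m + b) / 2).
  assert (Hfy : f y <= L).
  { apply Rnot_lt_le; intros Hlt.
    set (d := f y - L).
    set (z := b - Rmin ((b - y) / 2) (d / (2 * (K + 1)))).
    assert (Hd : 0 < d / (2 * (K + 1))) by (apply Rdiv_lt_0_compat; unfold d; lra).
    pose proof (Rmin_l ((b - y) / 2) (d / (2 * (K + 1)))).
    pose proof (Rmin_r ((b - y) / 2) (d / (2 * (K + 1)))).
    pose proof (Rmin_glb_lt ((b - y) / 2) (d / (2 * (K + 1))) 0).
    assert (Hz : y < z < b) by (unfold z, y in *; lra).
    assert (HKd : K * (b - z) <= d / 2).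
    { apply Rle_trans with (K * (d / (2 * (K + 1)))).
      - apply Rmult_le_compat_l; unfold z; lra.
      - apply Rmult_le_reg_r with (2 * (K + 1)); [lra |].
        field_simplify; [unfold d in *; nra | lra]. }
    pose proof (Hinc y z ltac:(unfold y in *; lra) (proj1 Hz) (proj2 Hz)).
    pose proof (Hbound z ltac:(unfold y in *; lra)).
    unfold d in *; lra. }
  pose proof (Hinc x y ltac:(lra) ltac:(unfold y; lra) ltac:(unfold y; lra)); lra.
Qed.

Lemma sin_sub_mul_cos_pos x : in_I x -> 0 < sin x - x * cos x.
Proof.
  intros Hx; unfold in_I in Hx.
  assert (H : sin 0 - 0 * cos 0 < sin x - x * cos x).
  { apply (lt_of_is_derive_pos (fun t => sin t - t * cos t) (fun t => t * sin t)); [lra | |].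
    - intros t _; auto_derive; [exact I | ring].
    - intros t Ht; apply Rmult_lt_0_compat; [lra | apply sin_gt_0; lra]. }
  rewrite sin_0 in H; lra.
Qed.

Lemma A_pos x : in_I x -> 0 < A x.
Proof.
  intros Hx; pose proof (sin_sub_mul_cos_pos x Hx); unfold in_I in Hx.
  pose proof (cos_gt_0 x ltac:(lra) ltac:(lra)).
  unfold A; apply Rmult_lt_0_compat; [apply pow_lt |]; lra.
Qed.

Definition deriv_num (q x s c : R) : R :=
  (s - x*c) * ((q - 1) * s * (s - x*c) * deriv_factor_slope x s c
               + c^2 * deriv_factor_at_1 x s c).

Lemma g1_is_derive q x : in_I x ->
  is_derive (g1 q) x (deriv_num q x (sin x) (cos x) / A x ^ 2).
Proof.
  intros Hx; pose proof (A_pos x Hx) as HA; pose proof (sin_sub_mul_cos_pos x Hx).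
  unfold in_I in Hx; pose proof (cos_gt_0 x ltac:(lra) ltac:(lra)).
  assert (Hpyth : sin x ^ 2 + cos x ^ 2 = 1) by (rewrite <- (sin2_cos2 x); unfold Rsqr; ring).
  unfold g1, A, B, Defs.C in *; auto_derive; [intro; nra |].
  set (s := sin x) in *; set (c := cos x) in *.
  (* the quotient rule gives [deriv_num] only up to a multiple of [s^2 + c^2 - 1] *)
  replace (deriv_num q x s c) with
    (deriv_num q x s c + (s^2 + c^2 - 1)
       * (s^3*c - 5*x*s^2*c^2 + x*s^4 + 7*x^2*s*c^3 - 4*x^2*s^3*c - 3*x^3*c^4
          + 7*x^3*s^2*c^2 - 4*x^4*s*c^3)) by (rewrite Hpyth; ring).
  unfold deriv_num, deriv_factor_slope, deriv_factor_at_1; field; lra.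
Qed.

Lemma deriv_num_eq_at_34_35 q x s c :
  deriv_num q x s c =
  (s - x*c) * ((q - 34/35) * s * (s - x*c) * deriv_factor_slope x s c
               + deriv_factor_at_34_35 x s c).
Proof. unfold deriv_num, deriv_factor_slope, deriv_factor_at_1, deriv_factor_at_34_35; field. Qed.

Lemma deriv_factor_slope_pos x : in_I x -> 0 < deriv_factor_slope x (sin x) (cos x).
Proof.
  intros Hx; unfold in_I in Hx; destruct (Rle_lt_dec x (313/200)).
  - apply (pos_of_scaled_cert deriv_factor_slope_cert 6 (97969/40000) x);
      [exact deriv_factor_slope_cert_pos | lra | nra |].
    apply deriv_factor_slope_taylor; [lra | apply sin_cos_in_taylor_box; lra].
  - apply deriv_factor_slope_near_pi2, sin_cos_in_near_pi2_box; lra.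
Qed.

Lemma deriv_factor_at_1_pos x : in_I x -> 0 < deriv_factor_at_1 x (sin x) (cos x).
Proof.
  intros Hx; unfold in_I in Hx; destruct (Rle_lt_dec x (313/200)).
  - apply (pos_of_scaled_cert deriv_factor_at_1_cert 10 (97969/40000) x);
      [exact deriv_factor_at_1_cert_pos | lra | nra |].
    apply deriv_factor_at_1_taylor; [lra | apply sin_cos_in_taylor_box; lra].
  - apply deriv_factor_at_1_near_pi2, sin_cos_in_near_pi2_box; lra.
Qed.

Lemma deriv_factor_at_34_35_neg x : in_I x -> deriv_factor_at_34_35 x (sin x) (cos x) < 0.
Proof.
  intros Hx; unfold in_I in Hx; destruct (Rle_lt_dec x (313/200)).
  - apply (neg_of_scaled_cert deriv_factor_at_34_35_cert 12 (97969/40000) x);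
      [exact deriv_factor_at_34_35_cert_neg | lra | nra |].
    apply deriv_factor_at_34_35_taylor; [lra | apply sin_cos_in_taylor_box; lra].
  - apply deriv_factor_at_34_35_near_pi2, sin_cos_in_near_pi2_box; lra.
Qed.

Lemma deriv_num_pos q x : 1 <= q -> in_I x -> 0 < deriv_num q x (sin x) (cos x).
Proof.
  intros Hq Hx; pose proof (sin_sub_mul_cos_pos x Hx).
  pose proof (deriv_factor_slope_pos x Hx); pose proof (deriv_factor_at_1_pos x Hx).
  unfold in_I in Hx; pose proof (sin_gt_0 x ltac:(lra) ltac:(lra)).
  pose proof (cos_gt_0 x ltac:(lra) ltac:(lra)).
  unfold deriv_num; apply Rmult_lt_0_compat; [lra |].
  assert (0 <= (q - 1) * sin x * (sin x - x * cos x) * deriv_factor_slope x (sin x) (cos x))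
    by (repeat apply Rmult_le_pos; lra).
  assert (0 < cos x ^ 2 * deriv_factor_at_1 x (sin x) (cos x))
    by (apply Rmult_lt_0_compat; [apply pow_lt |]; lra).
  lra.
Qed.

Lemma deriv_num_neg q x : q <= 34/35 -> in_I x -> deriv_num q x (sin x) (cos x) < 0.
Proof.
  intros Hq Hx; rewrite deriv_num_eq_at_34_35; pose proof (sin_sub_mul_cos_pos x Hx).
  pose proof (deriv_factor_slope_pos x Hx); pose proof (deriv_factor_at_34_35_neg x Hx).
  unfold in_I in Hx; pose proof (sin_gt_0 x ltac:(lra) ltac:(lra)).
  assert (0 <= (34/35 - q) * sin x * (sin x - x * cos x) * deriv_factor_slope x (sin x) (cos x))
    by (repeat apply Rmult_le_pos; lra).
  nra.
Qed.

Lemma g1_strictly_increasing q : 1 <= q -> strictly_increasing_on_I (g1 q).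
Proof.
  intros Hq x y Hx Hy Hxy; unfold in_I in *.
  apply (lt_of_is_derive_pos _ (fun t => deriv_num q t (sin t) (cos t) / A t ^ 2)); [exact Hxy | |].
  - intros t Ht; apply g1_is_derive; unfold in_I; lra.
  - intros t Ht; assert (in_I t) by (unfold in_I; lra).
    apply Rdiv_lt_0_compat; [apply deriv_num_pos | apply pow_lt, A_pos]; assumption.
Qed.

Lemma g1_strictly_decreasing q : q <= 34/35 -> strictly_decreasing_on_I (g1 q).
Proof.
  intros Hq x y Hx Hy Hxy; unfold in_I in *.
  apply (gt_of_is_derive_neg _ (fun t => deriv_num q t (sin t) (cos t) / A t ^ 2)); [exact Hxy | |].
  - intros t Ht; apply g1_is_derive; unfold in_I; lra.
  - intros t Ht; assert (Ht' : in_I t) by (unfold in_I; lra).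
    pose proof (deriv_num_neg q t Hq Ht'); pose proof (pow_lt _ 2 (A_pos t Ht')).
    apply Rmult_neg_pos; [| apply Rinv_0_lt_compat]; assumption.
Qed.

Lemma g1_sub_eq_at_1 q x : in_I x ->
  g1 q x - (3*q - 8/5) =
  ((q - 1) * gap_num_slope x (sin x) (cos x) + gap_num_at_1 x (sin x) (cos x)) / A x.
Proof.
  intros Hx; pose proof (sin_sub_mul_cos_pos x Hx); unfold in_I in Hx.
  pose proof (cos_gt_0 x ltac:(lra) ltac:(lra)).
  unfold g1, A, B, Defs.C, gap_num_slope, gap_num_at_1; field; lra.
Qed.

Lemma g1_sub_eq_at_34_35 q x : in_I x ->
  g1 q x - (3*q - 8/5) =
  ((q - 34/35) * gap_num_slope x (sin x) (cos x) + gap_num_at_34_35 x (sin x) (cos x)) / A x.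
Proof.
  intros Hx; pose proof (sin_sub_mul_cos_pos x Hx); unfold in_I in Hx.
  pose proof (cos_gt_0 x ltac:(lra) ltac:(lra)).
  unfold g1, A, B, Defs.C, gap_num_slope, gap_num_at_34_35; field; lra.
Qed.

Lemma gap_num_slope_pos x : 0 < x <= 3/2 -> 0 < gap_num_slope x (sin x) (cos x).
Proof.
  intros Hx; apply (pos_of_scaled_cert gap_num_slope_cert 8 (9/4) x);
    [exact gap_num_slope_cert_pos | lra | nra |].
  apply gap_num_slope_taylor; [lra | apply sin_cos_in_taylor_box; lra].
Qed.

Lemma gap_num_at_1_pos x : 0 < x <= 3/2 -> 0 < gap_num_at_1 x (sin x) (cos x).
Proof.
  intros Hx; apply (pos_of_scaled_cert gap_num_at_1_cert 8 (9/4) x);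
    [exact gap_num_at_1_cert_pos | lra | nra |].
  apply gap_num_at_1_taylor; [lra | apply sin_cos_in_taylor_box; lra].
Qed.

Lemma gap_num_at_34_35_neg x : 0 < x <= 3/2 -> gap_num_at_34_35 x (sin x) (cos x) < 0.
Proof.
  intros Hx; apply (neg_of_scaled_cert gap_num_at_34_35_cert 10 (9/4) x);
    [exact gap_num_at_34_35_cert_neg | lra | nra |].
  apply gap_num_at_34_35_taylor; [lra | apply sin_cos_in_taylor_box; lra].
Qed.

Lemma g1_gt_near_0 q x : 1 <= q -> 0 < x <= 3/2 -> 3*q - 8/5 < g1 q x.
Proof.
  intros Hq Hx; assert (HI : in_I x) by (pose proof PI2_3_2; unfold in_I; lra).
  pose proof (gap_num_slope_pos x Hx); pose proof (gap_num_at_1_pos x Hx).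
  assert (0 < g1 q x - (3*q - 8/5))
    by (rewrite (g1_sub_eq_at_1 q x HI); apply Rdiv_lt_0_compat; [nra | apply A_pos, HI]).
  lra.
Qed.

Lemma g1_lt_near_0 q x : q <= 34/35 -> 0 < x <= 3/2 -> g1 q x < 3*q - 8/5.
Proof.
  intros Hq Hx; assert (HI : in_I x) by (pose proof PI2_3_2; unfold in_I; lra).
  pose proof (g1_sub_eq_at_34_35 q x HI) as E; pose proof (A_pos x HI).
  pose proof (gap_num_slope_pos x Hx); pose proof (gap_num_at_34_35_neg x Hx).
  assert ((q - 34/35) * gap_num_slope x (sin x) (cos x) + gap_num_at_34_35 x (sin x) (cos x) < 0)
    by nra.
  assert (g1 q x - (3*q - 8/5) < 0)
    by (rewrite E; apply Rmult_neg_pos; [| apply Rinv_0_lt_compat]; assumption).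
  lra.
Qed.

Lemma g1_gt q x : 1 <= q -> in_I x -> 3*q - 8/5 < g1 q x.
Proof.
  intros Hq Hx; pose proof PI2_3_2; unfold in_I in Hx.
  destruct (Rle_lt_dec x (3/2)); [apply g1_gt_near_0; lra |].
  pose proof (g1_gt_near_0 q (3/2) Hq ltac:(lra)).
  pose proof (g1_strictly_increasing q Hq (3/2) x
                ltac:(unfold in_I; lra) ltac:(unfold in_I; lra) r).
  lra.
Qed.

Lemma g1_lt q x : q <= 34/35 -> in_I x -> g1 q x < 3*q - 8/5.
Proof.
  intros Hq Hx; pose proof PI2_3_2; unfold in_I in Hx.
  destruct (Rle_lt_dec x (3/2)); [apply g1_lt_near_0; lra |].
  pose proof (g1_lt_near_0 q (3/2) Hq ltac:(lra)).
  pose proof (g1_strictly_decreasing q Hq (3/2) x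
                ltac:(unfold in_I; lra) ltac:(unfold in_I; lra) r).
  lra.
Qed.

Lemma g1_1_eq z : in_I z ->
  g1 1 z = z^2 - 1
    + z * cos z * (z^3 * cos z + (2*z^2 - 3) * (sin z - z * cos z)) / (sin z - z * cos z)^2.
Proof.
  intros Hz; pose proof (sin_sub_mul_cos_pos z Hz); unfold in_I in Hz.
  pose proof (cos_gt_0 z ltac:(lra) ltac:(lra)).
  assert (Hpyth : sin z ^ 2 + cos z ^ 2 - 1 = 0) by (rewrite <- (sin2_cos2 z); unfold Rsqr; ring).
  unfold g1, A, B, Defs.C.
  set (s := sin z) in *; set (c := cos z) in *.
  replace (1 * (z * (s - z * c) * s ^ 2) - - (2 * z ^ 2 * c - z * s - c * s ^ 2)) with
    ((z^2 - 1) * ((s - z * c) ^ 2 * c) + z * c^2 * (z^3 * c + (2*z^2 - 3) * (s - z * c))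
     + (s^2 + c^2 - 1) * (z * s - 2 * z^2 * c)) by ring.
  rewrite Hpyth; field; lra.
Qed.

Lemma g1_1_le_near_pi2 z : 3/2 <= z < PI/2 -> g1 1 z <= PI^2/4 - 1 + 20 * (PI/2 - z).
Proof.
  intros Hz; pose proof PI_le_31416.
  assert (HI : in_I z) by (unfold in_I; lra).
  rewrite (g1_1_eq z HI).
  assert (Hc : 0 < cos z <= PI/2 - z).
  { rewrite <- (sin_shift z); split; [apply sin_gt_0 | left; apply sin_lt_x]; lra. }
  pose proof (sin_gt_0 z ltac:(lra) ltac:(lra)); pose proof (SIN_bound z).
  pose proof (sin2_cos2 z); unfold Rsqr in *.
  set (s := sin z) in *; set (c := cos z) in *.
  assert (Hs : 99/100 <= s) by nra.
  assert (Hzc : z * c <= 16/10 * (8/100)) by (apply Rmult_le_compat; lra).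
  assert (HD : 1/2 <= s - z * c <= 1) by (split; nra).
  set (D := s - z * c) in *.
  assert (Hz2 : 9/4 <= z^2 <= 247/100) by (split; nra).
  assert (Hz3 : 0 <= z^3 * c <= 4 * c).
  { split; [apply Rmult_le_pos; [apply pow_le |] | apply Rmult_le_compat_r]; nra. }
  assert (HzD : 0 <= (2*z^2 - 3) * D <= 2) by (split; nra).
  assert (HN : z * c * (z^3 * c + (2*z^2 - 3) * D) <= 5 * c).
  { assert (Hin : z^3 * c + (2*z^2 - 3) * D <= 3) by lra.
    apply Rle_trans with (z * c * 3); [apply Rmult_le_compat_l |]; nra. }
  assert (Hfrac : z * c * (z^3 * c + (2*z^2 - 3) * D) / D^2 <= 20 * c).
  { assert (HD2 : 1/4 <= D^2) by nra.
    apply (Rmult_le_reg_r (D^2)); [lra |].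
    unfold Rdiv; rewrite Rmult_assoc, Rinv_l, Rmult_1_r; [nra | apply pow_nonzero; lra]. }
  assert (z^2 <= PI^2/4) by nra.
  lra.
Qed.

Lemma g1_1_lt x : in_I x -> g1 1 x < PI^2/4 - 1.
Proof.
  intros Hx; pose proof PI2_3_2; unfold in_I in Hx.
  apply (lt_of_increasing_near_bound (g1 1) 0 (PI/2) (3/2) (PI^2/4 - 1) 20); [| lra | lra | | lra].
  - intros u v Hu Huv Hv; apply (g1_strictly_increasing 1); unfold in_I; lra.
  - exact g1_1_le_near_pi2.
Qed.

Theorem lemma6 (q : R) :
  (1 <= q ->
     strictly_increasing_on_I (g1 q) /\
     (1 < q -> forall x, in_I x -> 3 * q - 8 / 5 < g1 q x) /\
     (q = 1 -> forall x, in_I x -> 3 * q - 8 / 5 < g1 q x < PI ^ 2 / 4 - 1)) /\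
  (q <= 34 / 35 ->
     strictly_decreasing_on_I (g1 q) /\
     (forall x, in_I x -> g1 q x < 3 * q - 8 / 5)).
Proof.
  split; intros Hq.
  - split; [exact (g1_strictly_increasing q Hq) |]; split.
    + intros _ x Hx; exact (g1_gt q x Hq Hx).
    + intros -> x Hx; split; [exact (g1_gt 1 x Hq Hx) | exact (g1_1_lt x Hx)].
  - split; [exact (g1_strictly_decreasing q Hq) |].
    intros x Hx; exact (g1_lt q x Hq Hx).
Qed.
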